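(* Consider an $s$-stage Runge--Kutta method with coefficients $a_{ij}$, $b_i$ ($i,j=1,\dots,s$). If \[ a_{ij}a_{ik} - a_{ij}a_{jk} - a_{ik}a_{kj} = 0\qquad\text{for all } i,j,k\text{ with } j\neq k, \tag{P} \] then, up to a permutation of the stages (i.e. there is a permutation $\sigma$ of $\{1,\dots,s\}$ such that the coefficients $a_{\sigma(i)\sigma(j)}, b_{\sigma(i)}$ define the method), the method is an explicit Runge--Kutta method or a DIRK method. Consequently, a Runge--Kutta method with all $b_i\neq0$ is quadratic projectable if and only if, up to a permutation of its stages, it is a SyDIRK method.
   Context: A Runge--Kutta method with coefficients $a_{ij},b_i$ with $a_{ij}=0$ whenever $j>i$ is called explicit if $a_{ii}=0$ for all $i$, and diagonally implicit (DIRK) otherwise. A Runge--Kutta method is quadratic projectable if it satisfies both $b_ib_j - b_ia_{ij} - b_ja_{ji}=0$ for all $i,j=1,\dots,s$, and condition (P). A symplectic diagonally implicit Runge--Kutta (SyDIRK) method is one whose coefficients are $a_{ij}=b_j$ for $j<i$, $a_{ii}=b_i/2$, $a_{ij}=0$ for $j>i$, for given nonzero $b_1,\dots,b_s$. *)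

(* Runge--Kutta coefficients over a real field R,
   stages indexed by 'I_s (stage i+1 of the paper is index i). *)
From HB Require Import structures.
From mathcomp Require Import all_boot all_order all_algebra all_fingroup.
Set Implicit Arguments. Unset Strict Implicit. Unset Printing Implicit Defensive.
Import Order.TTheory GRing.Theory Num.Theory.
Local Open Scope ring_scope.

Section RK.
Variables (R : realFieldType) (s : nat).

Definition condP (a : 'I_s -> 'I_s -> R) : Prop :=
  forall i j k : 'I_s, j != k ->
    a i j * a i k - a i j * a j k - a i k * a k j = 0.

Definition lower_tri (a : 'I_s -> 'I_s -> R) : Prop :=
  forall i j : 'I_s, (i < j)%N -> a i j = 0.

Definition explicitRK (a : 'I_s -> 'I_s -> R) : Prop :=
  lower_tri a /\ (forall i, a i i = 0).

Definition DIRK (a : 'I_s -> 'I_s -> R) : Prop :=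
  lower_tri a /\ ~ (forall i, a i i = 0).

Definition perm_a (a : 'I_s -> 'I_s -> R) (sg : 'S_s) : 'I_s -> 'I_s -> R :=
  fun i j => a (sg i) (sg j).
Definition perm_b (b : 'I_s -> R) (sg : 'S_s) : 'I_s -> R :=
  fun i => b (sg i).

Definition quad_projectable (a : 'I_s -> 'I_s -> R) (b : 'I_s -> R) : Prop :=
  (forall i j : 'I_s, b i * b j - b i * a i j - b j * a j i = 0) /\ condP a.

Definition SyDIRK (a : 'I_s -> 'I_s -> R) (b : 'I_s -> R) : Prop :=
  (forall i, b i != 0) /\
  forall i j : 'I_s,
    a i j = (if (j < i)%N then b j else if i == j then b i / 2 else 0).

End RK.

(** Condition (P) with [i = j] forbids two-cycles [a_jk a_kj <> 0], and with
    [a_ik = 0] it forbids [a_ij a_jk <> 0]; hence "stage [x] uses stage [y]"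
    ([x <> y], [a_xy <> 0]) is a strict partial order on the stages.  Listing
    the stages along a linear extension of it makes the tableau lower
    triangular, i.e. explicit or DIRK.  For a lower triangular tableau with
    nonzero weights, the symplecticity condition [b_i b_j = b_i a_ij + b_j a_ji]
    forces [a_ij = b_j] below and [a_ii = b_i/2] on the diagonal, which is
    SyDIRK; conversely SyDIRK tableaux satisfy both conditions, and both
    conditions are invariant under permuting the stages. *)

From mathcomp Require Import all_boot all_order all_algebra all_fingroup.
From mathcomp Require Import zify ring.
Import GRing.Theory Num.Theory.
Local Open Scope ring_scope.
Set Implicit Arguments.
Unset Strict Implicit.

Lemma exists_perm_sorting n (f : 'I_n -> nat) :
  exists p : 'S_n, forall x y, (f x < f y)%N -> (p x < p y)%N.
Proof.
pose key x := (f x * n + x)%N.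
have key_inj : injective key.
  by move=> x y /(congr1 (modn^~ n)); rewrite !modnMDl !modn_small // => /val_inj.
have key_mono x y : (f x < f y)%N -> (key x < key y)%N.
  by have := ltn_ord x; rewrite /key; nia.
pose below x := [set y | (key y < key x)%N].
have below_lt x : (#|below x| < n)%N.
  rewrite -[n in (_ < n)%N]card_ord; apply: proper_card; apply/properP.
  by split; [apply/subsetP | exists x; rewrite ?inE ?ltnn].
have below_mono x y : (key x < key y)%N -> (#|below x| < #|below y|)%N.
  move=> lt_xy; apply: proper_card; apply/properP; split.
    by apply/subsetP=> z; rewrite !inE => /ltn_trans; apply.
  by exists x; rewrite !inE ?ltnn.
have rank_inj : injective (fun x => Ordinal (below_lt x)).
  move=> x y /(congr1 val) /= eq_xy; apply: key_inj.
  by case: (ltngtP (key x) (key y)) => // /below_mono; rewrite eq_xy ltnn.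
by exists (perm rank_inj) => x y /key_mono/below_mono; rewrite !permE.
Qed.

(* Sort by the number of predecessors, which grows strictly along [r]. *)
Lemma exists_linear_extension n (r : rel 'I_n) :
  transitive r -> irreflexive r ->
  exists p : 'S_n, forall x y, r x y -> (p x < p y)%N.
Proof.
move=> r_trans r_irr.
have [p p_sorts] := exists_perm_sorting (fun x => #|[set z | r z x]|).
exists p => x y r_xy; apply: p_sorts; apply: proper_card; apply/properP; split.
  by apply/subsetP=> z; rewrite !inE => r_zx; apply: r_trans r_xy.
by exists x; rewrite !inE ?r_irr.
Qed.

Lemma lower_tri_explicit_or_DIRK (R : realFieldType) s (a : 'I_s -> 'I_s -> R) :
  lower_tri a -> explicitRK a \/ DIRK a.
Proof.
move=> tri; have [/forallP diag0 | diag_nz] := boolP [forall i, a i i == 0].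
  by left; split=> // i; apply/eqP.
by right; split=> // diag0; case/negP: diag_nz; apply/forallP=> i; apply/eqP.
Qed.

Section ConditionP.
Variables (R : realFieldType) (s : nat) (a : 'I_s -> 'I_s -> R).
Hypothesis hP : condP a.

Lemma condP_mul_swap x y : x != y -> a x y * a y x = 0.
Proof. by move=> nxy; move/eqP: (hP x nxy); rewrite subrr sub0r oppr_eq0 => /eqP. Qed.

Lemma condP_mul_neq0 x y z :
  y != z -> a x y != 0 -> a y z != 0 -> a x z != 0.
Proof.
move=> nyz axy ayz; apply/eqP=> axz; move/eqP: (hP x nyz).
by rewrite axz mul0r mulr0 subr0 sub0r oppr_eq0 mulf_eq0 (negPf axy) (negPf ayz).
Qed.

Definition uses_stage x y := (x != y) && (a x y != 0).

Lemma uses_stage_trans : transitive uses_stage.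
Proof.
move=> y x z /andP[nxy axy] /andP[nyz ayz]; rewrite /uses_stage.
rewrite (condP_mul_neq0 nyz axy ayz) andbT; apply: contraTneq ayz => exz.
by move/eqP: (condP_mul_swap nxy); rewrite mulf_eq0 (negPf axy) exz negbK.
Qed.

Lemma condP_lower_tri_perm : exists sg : 'S_s, lower_tri (perm_a a sg).
Proof.
have irr : irreflexive (fun x y => uses_stage y x) by move=> x; rewrite /uses_stage eqxx.
have [p p_ext] := exists_linear_extension (rev_trans uses_stage_trans) irr.
exists p^-1%g => i j lt_ij; rewrite /perm_a; apply/eqP; apply: contraTT (lt_ij) => a_nz.
have n_ij : (p^-1 i != p^-1 j)%g.
  by rewrite (inj_eq perm_inj); apply: contraTneq lt_ij => ->; rewrite ltnn.
have := p_ext (p^-1 j)%g (p^-1 i)%g; rewrite /uses_stage n_ij a_nz !permKV.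
by rewrite -leqNgt => /(_ isT) /ltnW.
Qed.

End ConditionP.

Section SymplecticDIRK.
Variables (R : realFieldType) (s : nat) (a : 'I_s -> 'I_s -> R) (b : 'I_s -> R).

Definition symplectic := forall i j, b i * b j - b i * a i j - b j * a j i = 0.

Lemma lower_tri_symplectic_SyDIRK :
  (forall i, b i != 0) -> lower_tri a -> symplectic -> SyDIRK a b.
Proof.
move=> b_nz tri sympl; split=> // i j.
case: ltngtP => [lt_ji | lt_ij | /val_inj eq_ij].
- apply: (mulfI (b_nz i)); move: (sympl i j); rewrite (tri j i lt_ji) mulr0 subr0.
  by move/eqP; rewrite subr_eq0 => /eqP.
- by rewrite -val_eqE /= ltn_eqF ?tri.
- rewrite -eq_ij eqxx; have := sympl j j.
  have -> : b j * b j - b j * a j j - b j * a j j = b j * (b j - 2 * a j j) by ring.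
  move/eqP; rewrite mulf_eq0 (negPf (b_nz j)) subr_eq0 => /eqP ->.
  by field.
Qed.

Hypothesis syd : SyDIRK a b.

Lemma SyDIRK_lower_tri : lower_tri a.
Proof. by move=> i j lt_ij; case: syd => _ ->; rewrite ltnNge ltnW // -val_eqE /= ltn_eqF. Qed.

Lemma SyDIRK_symplectic : symplectic.
Proof.
case: syd => _ aE i j; rewrite (aE i j) (aE j i) [j == i]eq_sym.
case: (ltngtP j i) => [lt_ji | lt_ij | /val_inj ->].
- by rewrite -val_eqE /= gtn_eqF //; ring.
- by rewrite -val_eqE /= ltn_eqF //; ring.
- by rewrite eqxx; field.
Qed.

(* The expression in (P) is symmetric in [j] and [k]. *)
Lemma SyDIRK_condP : condP a.
Proof.
move=> i j k; wlog lt_jk : j k / (j < k)%N.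
  move=> sym n_jk; case: (ltngtP j k) => [lt_jk | lt_kj | /val_inj e_jk].
  - exact: sym.
  - by rewrite -[RHS](sym k j lt_kj); [ring | rewrite eq_sym].
  - by rewrite e_jk eqxx in n_jk.
case: syd => _ aE _; rewrite (SyDIRK_lower_tri lt_jk) (aE k j) lt_jk.
case: (leqP k i) => [le_ki | lt_ik]; last by rewrite (SyDIRK_lower_tri lt_ik); ring.
by rewrite (aE i j) (leq_trans lt_jk le_ki); ring.
Qed.

End SymplecticDIRK.

Lemma quad_projectable_perm (R : realFieldType) s
    (a : 'I_s -> 'I_s -> R) (b : 'I_s -> R) (sg : 'S_s) :
  quad_projectable (perm_a a sg) (perm_b b sg) <-> quad_projectable a b.
Proof.
split=> -[sympl hP]; split.
- by move=> i j; have := sympl (sg^-1 i)%g (sg^-1 j)%g; rewrite /perm_a /perm_b !permKV.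
- move=> i j k; rewrite -(permKV sg i) -(permKV sg j) -(permKV sg k) (inj_eq perm_inj).
  exact: hP.
- by move=> i j; apply: sympl.
- by move=> i j k; rewrite -(inj_eq (@perm_inj _ sg)); apply: hP.
Qed.

Theorem theorem2p7 (R : realFieldType) (s : nat) :
  (forall (a : 'I_s -> 'I_s -> R),
      condP a ->
      exists sg : 'S_s, explicitRK (perm_a a sg) \/ DIRK (perm_a a sg))
  /\
  (forall (a : 'I_s -> 'I_s -> R) (b : 'I_s -> R),
      (forall i, b i != 0) ->
      (quad_projectable a b <->
       exists sg : 'S_s, SyDIRK (perm_a a sg) (perm_b b sg))).
Proof.
split=> [a /condP_lower_tri_perm [sg /lower_tri_explicit_or_DIRK] | a b b_nz].
  by exists sg.
split=> [qp | [sg syd]].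
- have [_ /condP_lower_tri_perm [sg tri]] := qp; exists sg.
  have [sympl_sg _] := (quad_projectable_perm a b sg).2 qp.
  by apply: lower_tri_symplectic_SyDIRK => // i; apply: b_nz.
- apply/(quad_projectable_perm _ _ sg).
  by split; [exact: (SyDIRK_symplectic syd) | exact: (SyDIRK_condP syd)].
Qed.
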